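(* In the setting of the context, $$\|\mathcal D\|_\perp\le\big(\lambda_2^{(2)}\lambda_2^{(1)}\big)^2.$$
   Context: Let $x_0\in\mathbb C^n\setminus\{0\}$ and $A=[A_1,A_2]$ with $A_1,A_2\in\mathbb C^{n\times N/2}$ such that each $A_l^*$ is isometric ($A_lA_l^*=I_n$). For $l=1,2$: $b_l=|A_l^*x_0|$, $B_l=A_l\,\mathrm{diag}\big(\frac{A_l^*x_0}{|A_l^*x_0|}\big)$ (componentwise quotient, convention $y(j)/|y(j)|=1$ if $y(j)=0$), $\mathcal B_l=\begin{bmatrix}\Re B_l\\ \Im B_l\end{bmatrix}\in\mathbb R^{2n\times N/2}$, and $\lambda_2^{(l)}=\max\{\|\Im(B_l^*u)\|:u\in\mathbb C^n,\ \Re((iu)^*x_0)=0,\ \|u\|=1\}$. Let $G(v)=\begin{bmatrix}\Re v\\ \Im v\end{bmatrix}\in\mathbb R^{2n}$, $\xi_1=G(x_0)$, $\mathcal D=\mathcal B_2\mathcal B_2^\top\mathcal B_1\mathcal B_1^\top\in\mathbb R^{2n\times 2n}$, and $\|\mathcal D\|_\perp=\max\{\|\mathcal D\xi\|:\xi\in\mathbb R^{2n},\ \xi^\top\xi_1=0,\ \|\xi\|=1\}$. *)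

(* Complex numbers are modelled by an arbitrary
   numClosedFieldType C (e.g. algC); real quantities are elements of C
   lying in Num.real. *)
From HB Require Import structures.
From mathcomp Require Import all_boot all_order all_algebra.
Set Implicit Arguments. Unset Strict Implicit. Unset Printing Implicit Defensive.
Import Order.TTheory GRing.Theory Num.Theory.
Local Open Scope ring_scope.

Section Defs.
Variable C : numClosedFieldType.

Definition ctr (p q : nat) (M : 'M[C]_(p, q)) : 'M[C]_(q, p) :=
  (map_mx (fun z => z^*) M)^T.

Definition vnorm (p : nat) (v : 'cV[C]_p) : C :=
  sqrtC (\sum_i `|v i 0| ^+ 2).

(* componentwise phase, with y/|y| := 1 when y = 0 *)
Definition phase (y : C) : C := if y == 0 then 1 else y / `|y|.

Definition Bmat (n m : nat) (A : 'M[C]_(n, m)) (x0 : 'cV[C]_n) : 'M[C]_(n, m) :=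
  A *m diag_mx (\row_j phase ((ctr A *m x0) j 0)).

Definition realify (n m : nat) (M : 'M[C]_(n, m)) : 'M[C]_(n + n, m) :=
  col_mx (map_mx (fun z => 'Re z) M) (map_mx (fun z => 'Im z) M).

Definition Gvec (n : nat) (v : 'cV[C]_n) : 'cV[C]_(n + n) := realify v.

Definition calB (n m : nat) (A : 'M[C]_(n, m)) (x0 : 'cV[C]_n) : 'M[C]_(n + n, m) :=
  realify (Bmat A x0).

Definition Dmat (n m : nat) (A1 A2 : 'M[C]_(n, m)) (x0 : 'cV[C]_n) : 'M[C]_(n + n) :=
  calB A2 x0 *m (calB A2 x0)^T *m calB A1 x0 *m (calB A1 x0)^T.

Definition is_max (S : C -> Prop) (r : C) : Prop :=
  S r /\ forall s, S s -> s <= r.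

Definition lambda2_set (n m : nat) (A : 'M[C]_(n, m)) (x0 : 'cV[C]_n) (s : C) : Prop :=
  exists u : 'cV[C]_n,
    'Re ((ctr ('i *: u) *m x0) 0 0) = 0 /\ vnorm u = 1 /\
    s = vnorm (map_mx (fun z => 'Im z) (ctr (Bmat A x0) *m u)).

Definition Dperp_set (n m : nat) (A1 A2 : 'M[C]_(n, m)) (x0 : 'cV[C]_n) (s : C) : Prop :=
  exists xi : 'cV[C]_(n + n),
    (forall i, xi i 0 \is Num.real) /\
    (xi^T *m Gvec x0) 0 0 = 0 /\ vnorm xi = 1 /\
    s = vnorm (Dmat A1 A2 x0 *m xi).

End Defs.

(* With P_l := calB_l calB_l^T we have D = P_2 P_1.  Each P_l is symmetric and fixes
   xi_1 = G(x0), because B_l B_l^* = I and B_l^* x0 is real; hence P_l maps xi_1^perp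
   into itself.  A real eta orthogonal to xi_1 is G(v) with Re(v^* x0) = 0, and
   calB_l^T G(v) = Re(B_l^* v) = -Im(B_l^* (-i v)), so ||calB_l^T eta|| <= lambda_l ||eta||
   by definition of lambda_2^{(l)}.  Then
     ||P_l eta||^2 = <calB_l^T P_l eta, calB_l^T eta> <= lambda_l^2 ||P_l eta|| ||eta||,
   i.e. ||P_l eta|| <= lambda_l^2 ||eta||, and the bound for D follows by composing. *)
From HB Require Import structures.
From mathcomp Require Import all_boot all_order all_algebra ring.
Set Implicit Arguments. Unset Strict Implicit. Unset Printing Implicit Defensive.
Import Order.TTheory GRing.Theory Num.Theory.
Local Open Scope ring_scope.

Section RealVectors.
Variable C : numClosedFieldType.

Definition real_mx p q (M : 'M[C]_(p, q)) := forall i j, M i j \is Num.real.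

Definition sqnorm p (v : 'cV[C]_p) : C := \sum_i `|v i 0| ^+ 2.

Definition dotv p (a b : 'cV[C]_p) : C := (a^T *m b) 0 0.

Lemma real_mxM p q r (M : 'M[C]_(p, q)) (N : 'M[C]_(q, r)) :
  real_mx M -> real_mx N -> real_mx (M *m N).
Proof. by move=> hM hN i j; rewrite mxE rpred_sum // => k _; apply: rpredM. Qed.

Lemma real_mxT p q (M : 'M[C]_(p, q)) : real_mx M -> real_mx M^T.
Proof. by move=> hM i j; rewrite mxE. Qed.

Lemma realify_real p q (M : 'M[C]_(p, q)) : real_mx (realify M).
Proof.
move=> i j; rewrite /realify -[i]splitK; case: (split i) => k /=.
  by rewrite col_mxEu mxE Creal_Re.
by rewrite col_mxEd mxE Creal_Im.
Qed.

Lemma sqnorm_ge0 p (v : 'cV[C]_p) : 0 <= sqnorm v.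
Proof. by apply: sumr_ge0 => i _; rewrite exprn_ge0. Qed.

Lemma sqnorm_eq0 p (v : 'cV[C]_p) : sqnorm v = 0 -> v = 0.
Proof.
move=> v0; apply/matrixP => i j; rewrite (ord1 j) mxE.
have /(_ i isT) := psumr_eq0P (fun i _ => exprn_ge0 2 (normr_ge0 (v i 0))) v0.
by move/eqP; rewrite expf_eq0 /= normr_eq0 => /eqP.
Qed.

Lemma sqnormZ p (c : C) (v : 'cV[C]_p) : sqnorm (c *: v) = `|c| ^+ 2 * sqnorm v.
Proof.
by rewrite /sqnorm mulr_sumr; apply: eq_bigr => i _; rewrite mxE normrM exprMn.
Qed.

Lemma sqnorm_dot p (v : 'cV[C]_p) : real_mx v -> sqnorm v = dotv v v.
Proof.
move=> vR; rewrite /dotv mxE; apply: eq_bigr => i _.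
by rewrite mxE real_normK // expr2.
Qed.

Lemma dotv_CauchySchwarz p (a b : 'cV[C]_p) : real_mx a -> real_mx b ->
  dotv a b ^+ 2 <= dotv a a * dotv b b.
Proof.
move=> aR bR; have [CS _] := CauchySchwarz (@dotmx C p) a^T b^T.
have dotmx_real u v : real_mx v -> dotmx u^T v^T = dotv u v.
  move=> vR; rewrite dotmxE /dotv !mxE; apply: eq_bigr => i _.
  by rewrite !mxE conj_Creal.
have : `|dotmx a^T b^T| ^+ 2 <= dotmx a^T a^T * dotmx b^T b^T := CS.
rewrite !dotmx_real // real_normK //.
by apply: real_mxM => //; apply: real_mxT.
Qed.

End RealVectors.

Section Realification.
Variable C : numClosedFieldType.

Lemma ctrE p q (M : 'M[C]_(p, q)) i j : ctr M i j = (M j i)^*.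
Proof. by rewrite !mxE. Qed.

Lemma ctrZ p q (c : C) (M : 'M[C]_(p, q)) : ctr (c *: M) = c^* *: ctr M.
Proof. by apply/matrixP => i j; rewrite !mxE rmorphM. Qed.

Lemma phase_mul_conj (y : C) : phase y * (phase y)^* = 1.
Proof.
rewrite /phase; case: eqP => [_|/eqP y0]; first by rewrite conjC1 mulr1.
have ny0 : `|y| != 0 by rewrite normr_eq0.
rewrite rmorphM /= fmorphV /= conj_normC mulrACA -normCK.
by rewrite -invfM -expr2 divff // expf_neq0.
Qed.

Lemma conj_phase_mul_real (y : C) : (phase y)^* * y \is Num.real.
Proof.
rewrite /phase; case: eqP => [->|/eqP y0]; first by rewrite mulr0 rpred0.
rewrite rmorphM /= fmorphV /= conj_normC mulrAC -normCKC.
by rewrite rpredM ?rpredV ?rpredX ?normr_real.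
Qed.

Lemma sum_realify p q r (M : 'M[C]_(p, q)) (N : 'M[C]_(p, r)) j k (f : C -> C -> C) :
  \sum_(i < p + p) f (realify M i j) (realify N i k) =
  \sum_(i < p) (f ('Re (M i j)) ('Re (N i k)) + f ('Im (M i j)) ('Im (N i k))).
Proof.
rewrite big_split_ord big_split /=.
congr (_ + _); apply: eq_bigr => i _; rewrite /realify.
  by rewrite !col_mxEu !mxE.
by rewrite !col_mxEd !mxE.
Qed.

Lemma dotv_Gvec p (u w : 'cV[C]_p) : dotv (Gvec u) (Gvec w) = 'Re ((ctr u *m w) 0 0).
Proof.
rewrite /dotv !mxE raddf_sum /=.
rewrite (eq_bigr (fun i => (Gvec u i 0) * (Gvec w i 0))) => [|i _]; last by rewrite mxE.
rewrite (sum_realify u w 0 0 (fun x y => x * y)); apply: eq_bigr => i _.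
by rewrite !mxE ReM Re_conj Im_conj mulNr opprK.
Qed.

Lemma sqnorm_Gvec p (u : 'cV[C]_p) : sqnorm (Gvec u) = sqnorm u.
Proof.
rewrite /sqnorm (sum_realify u u 0 0 (fun x _ => `|x| ^+ 2)); apply: eq_bigr => i _.
by rewrite [RHS]normC2_Re_Im !real_normK ?Creal_Re ?Creal_Im.
Qed.

Lemma real_Gvec p (eta : 'cV[C]_(p + p)) : real_mx eta ->
  eta = Gvec (usubmx eta + 'i *: dsubmx eta).
Proof.
move=> etaR; rewrite -[LHS](vsubmxK eta) /Gvec /realify; congr col_mx.
  by apply/matrixP => i j; rewrite !mxE Re_rect //; apply: etaR.
by apply/matrixP => i j; rewrite !mxE Im_rect //; apply: etaR.
Qed.

Lemma map_Re_real p (v : 'cV[C]_p) : real_mx v -> map_mx (fun z => 'Re z) v = v.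
Proof. by move=> vR; apply/matrixP => i j; rewrite mxE; apply/Creal_ReP. Qed.

Variables (n m : nat) (A : 'M[C]_(n, m)) (x0 : 'cV[C]_n).

Lemma BmatE i j : Bmat A x0 i j = A i j * phase ((ctr A *m x0) j 0).
Proof. by rewrite /Bmat mul_mx_diag !mxE. Qed.

Lemma Bmat_mul_ctr : A *m ctr A = 1%:M -> Bmat A x0 *m ctr (Bmat A x0) = 1%:M.
Proof.
move=> AA; rewrite -AA; apply/matrixP => i k; rewrite !mxE.
apply: eq_bigr => j _; rewrite !ctrE !BmatE rmorphM /=.
by rewrite mulrACA phase_mul_conj mulr1.
Qed.

Lemma ctr_Bmat_x0_real : real_mx (ctr (Bmat A x0) *m x0).
Proof.
move=> j k; rewrite (ord1 k) mxE.
have -> : \sum_i ctr (Bmat A x0) j i * x0 i 0 =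
          (phase ((ctr A *m x0) j 0))^* * (ctr A *m x0) j 0.
  rewrite [X in _ = _ * X]mxE mulr_sumr; apply: eq_bigr => i _.
  by rewrite !ctrE BmatE rmorphM /= mulrAC mulrC.
exact: conj_phase_mul_real.
Qed.

Lemma trmx_calB_Gvec (v : 'cV[C]_n) :
  (calB A x0)^T *m Gvec v = map_mx (fun z => 'Re z) (ctr (Bmat A x0) *m v).
Proof.
apply/matrixP => j k; rewrite !mxE raddf_sum /=.
rewrite (eq_bigr (fun i => calB A x0 i j * Gvec v i k)) => [|i _]; last by rewrite mxE.
rewrite (sum_realify (Bmat A x0) v j k (fun x y => x * y)); apply: eq_bigr => i _.
by rewrite !mxE ReM Re_conj Im_conj mulNr opprK.
Qed.

Lemma calB_mul_real (w : 'cV[C]_m) : real_mx w -> calB A x0 *m w = Gvec (Bmat A x0 *m w).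
Proof.
move=> wR; rewrite /calB /Gvec /realify mul_col_mx.
by congr col_mx; apply/matrixP => i k; rewrite !mxE raddf_sum; apply: eq_bigr => j _;
  rewrite !mxE; [exact/esym/ReMr/wR | exact/esym/ImMr/wR].
Qed.

Definition Pmat : 'M[C]_(n + n) := calB A x0 *m (calB A x0)^T.

Lemma Pmat_real : real_mx Pmat.
Proof. by apply: real_mxM; [|apply: real_mxT]; apply: realify_real. Qed.

Hypothesis A_coisometry : A *m ctr A = 1%:M.

Lemma Pmat_Gvec_x0 : Pmat *m Gvec x0 = Gvec x0.
Proof.
have yR := ctr_Bmat_x0_real.
rewrite /Pmat -mulmxA trmx_calB_Gvec (map_Re_real yR) (calB_mul_real yR).
by rewrite mulmxA Bmat_mul_ctr // mul1mx.
Qed.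

Lemma Pmat_perp (eta : 'cV[C]_(n + n)) :
  dotv eta (Gvec x0) = 0 -> dotv (Pmat *m eta) (Gvec x0) = 0.
Proof.
have PT : Pmat^T = Pmat by rewrite /Pmat trmx_mul trmxK.
by rewrite /dotv trmx_mul PT -mulmxA Pmat_Gvec_x0.
Qed.

End Realification.

Section Lambda2.
Variable C : numClosedFieldType.
Variables (n m : nat) (A : 'M[C]_(n, m)) (x0 : 'cV[C]_n) (lam : C).
Hypothesis lam_max : is_max (lambda2_set A x0) lam.

Lemma lambda2_ge0 : 0 <= lam.
Proof. by case: lam_max => -[u [_ [_ ->]]] _; rewrite sqrtC_ge0 sqnorm_ge0. Qed.

Lemma lambda2_Re_bound (v : 'cV[C]_n) : 'Re ((ctr v *m x0) 0 0) = 0 ->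
  sqnorm (map_mx (fun z => 'Re z) (ctr (Bmat A x0) *m v)) <= lam ^+ 2 * sqnorm v.
Proof.
move=> v_perp; have [v0|v_gt0] := eqVneq (sqnorm v) 0.
  rewrite v0 mulr0 (sqnorm_eq0 v0) mulmx0 /sqnorm big1 // => i _.
  by rewrite !mxE raddf0 normr0 expr0n.
set X := sqnorm _; set s := sqrtC (sqnorm v).
have s_gt0 : 0 < s by rewrite sqrtC_gt0 lt_def v_gt0 sqnorm_ge0.
have s2 : s ^+ 2 = sqnorm v by rewrite sqrtCK.
have sVR : s^-1 \is Num.real by rewrite rpredV gtr0_real.
have normsV2 : `|s^-1| ^+ 2 = s ^- 2 by rewrite ger0_norm ?invr_ge0 ?ltW // exprVn.
pose u := s^-1 *: (- 'i *: v).
have iu : 'i *: u = s^-1 *: v.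
  by rewrite /u !scalerA mulrAC mulrN -expr2 sqrCi opprK mul1r.
have u_perp : 'Re ((ctr ('i *: u) *m x0) 0 0) = 0.
  by rewrite iu ctrZ -scalemxAl mxE conj_Creal // ReMl // v_perp mulr0.
have u_unit : vnorm u = 1.
  rewrite /vnorm -/(sqnorm u) /u !sqnormZ normrN normCi expr1n mul1r normsV2 -s2.
  by rewrite mulVf ?sqrtC1 // expf_neq0 // gt_eqF.
have Im_u : sqnorm (map_mx (fun z => 'Im z) (ctr (Bmat A x0) *m u)) = s ^- 2 * X.
  rewrite /X /sqnorm mulr_sumr; apply: eq_bigr => i _.
  rewrite /u -!scalemxAr !mxE ImMl // mulNr raddfN /= ImMil.
  by rewrite normrM normrN exprMn normsV2.
have := lam_max.2 _ (ex_intro _ u (conj u_perp (conj u_unit erefl))).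
rewrite /vnorm -/(sqnorm _) Im_u => sqrt_le.
have X_le : s ^- 2 * X <= lam ^+ 2.
  rewrite -[leLHS]sqrtCK lerXn2r // nnegrE ?sqrtC_ge0 ?lambda2_ge0 //.
  by rewrite mulr_ge0 ?sqnorm_ge0 // invr_ge0 exprn_ge0 // ltW.
rewrite -s2 mulrC -(ler_pM2l (_ : 0 < s ^- 2)) ?invr_gt0 ?exprn_gt0 //.
by rewrite mulrA mulVf ?mul1r // expf_neq0 // gt_eqF.
Qed.

Lemma trmx_calB_perp_bound (eta : 'cV[C]_(n + n)) :
  real_mx eta -> dotv eta (Gvec x0) = 0 ->
  sqnorm ((calB A x0)^T *m eta) <= lam ^+ 2 * sqnorm eta.
Proof.
move=> /real_Gvec -> eta_perp; rewrite trmx_calB_Gvec !sqnorm_Gvec.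
by apply: lambda2_Re_bound; rewrite -dotv_Gvec.
Qed.

Hypothesis A_coisometry : A *m ctr A = 1%:M.

Lemma Pmat_perp_bound (eta : 'cV[C]_(n + n)) :
  real_mx eta -> dotv eta (Gvec x0) = 0 ->
  sqnorm (Pmat A x0 *m eta) <= lam ^+ 4 * sqnorm eta.
Proof.
move=> etaR eta_perp; set w := Pmat A x0 *m eta.
have BR : real_mx (calB A x0)^T by apply/real_mxT/realify_real.
have wR : real_mx w by apply: real_mxM => //; apply: Pmat_real.
have w_perp : dotv w (Gvec x0) = 0 by apply: Pmat_perp.
set a := (calB A x0)^T *m w; set b := (calB A x0)^T *m eta.
have aR : real_mx a by apply: real_mxM.
have bR : real_mx b by apply: real_mxM.
have w_ab : sqnorm w = dotv a b.
  by rewrite sqnorm_dot // /dotv /a /b (trmx_mul (calB A x0)^T w) (trmxK (calB A x0)) -mulmxA (mulmxA (calB A x0)).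
have CS := dotv_CauchySchwarz aR bR.
rewrite -!sqnorm_dot // -w_ab in CS.
have a_le := trmx_calB_perp_bound wR w_perp.
have b_le := trmx_calB_perp_bound etaR eta_perp.
have lam0 := lambda2_ge0.
have [w0|w_gt0] := eqVneq (sqnorm w) 0.
  by rewrite w0 mulr_ge0 ?exprn_ge0 ?sqnorm_ge0.
rewrite -(ler_pM2l (_ : 0 < sqnorm w)) ?lt_def ?w_gt0 ?sqnorm_ge0 //.
rewrite -expr2 (le_trans CS) // (_ : _ * (_ * _) = (lam ^+ 2 * sqnorm w) * (lam ^+ 2 * sqnorm eta)).
  by apply: ler_pM => //; apply: sqnorm_ge0.
by ring.
Qed.

End Lambda2.

Lemma vnorm_le (C : numClosedFieldType) p (v : 'cV[C]_p) (c : C) :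
  0 <= c -> sqnorm v <= c ^+ 2 -> vnorm v <= c.
Proof.
move=> c0 v_le; rewrite /vnorm -/(sqnorm v) -(sqrCK c0).
by rewrite ler_sqrtC // nnegrE ?sqnorm_ge0 ?exprn_ge0.
Qed.

Lemma Dmat_perp_bound (C : numClosedFieldType) (n m : nat) (A1 A2 : 'M[C]_(n, m))
    (x0 : 'cV[C]_n) (lam1 lam2 : C) (xi : 'cV[C]_(n + n)) :
  A1 *m ctr A1 = 1%:M -> A2 *m ctr A2 = 1%:M ->
  is_max (lambda2_set A1 x0) lam1 -> is_max (lambda2_set A2 x0) lam2 ->
  real_mx xi -> dotv xi (Gvec x0) = 0 ->
  sqnorm (Dmat A1 A2 x0 *m xi) <= ((lam2 * lam1) ^+ 2) ^+ 2 * sqnorm xi.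
Proof.
move=> A1A A2A lam1_max lam2_max xiR xi_perp.
have P1xiR : real_mx (Pmat A1 x0 *m xi) by apply: real_mxM => //; apply: Pmat_real.
have P1_le := Pmat_perp_bound lam1_max A1A xiR xi_perp.
have P2_le := Pmat_perp_bound lam2_max A2A P1xiR (Pmat_perp A1A xi_perp).
have -> : Dmat A1 A2 x0 *m xi = Pmat A2 x0 *m (Pmat A1 x0 *m xi) by rewrite /Dmat !mulmxA.
rewrite (le_trans P2_le) // (_ : _ ^+ 2 = lam2 ^+ 4 * lam1 ^+ 4); last by ring.
by rewrite -mulrA ler_wpM2l ?exprn_ge0 ?(lambda2_ge0 lam2_max).
Qed.

Theorem mainTheorem12 (C : numClosedFieldType) (n m : nat)
    (A1 A2 : 'M[C]_(n, m)) (x0 : 'cV[C]_n) :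
  x0 != 0 ->
  A1 *m ctr A1 = 1%:M ->
  A2 *m ctr A2 = 1%:M ->
  forall lam1 lam2 dperp : C,
    is_max (lambda2_set A1 x0) lam1 ->
    is_max (lambda2_set A2 x0) lam2 ->
    is_max (Dperp_set A1 A2 x0) dperp ->
    dperp <= (lam2 * lam1) ^+ 2.
Proof.
move=> _ A1A A2A lam1 lam2 dperp lam1_max lam2_max [[xi [xiR [xi_perp [xi_unit ->]]]] _].
have xi_sqnorm : sqnorm xi = 1.
  by rewrite -[LHS]sqrtCK -/(vnorm xi) xi_unit expr1n.
apply: vnorm_le; first by rewrite exprn_ge0 ?mulr_ge0 ?(lambda2_ge0 lam1_max) ?(lambda2_ge0 lam2_max).
rewrite -[leRHS]mulr1 -xi_sqnorm.
by apply: Dmat_perp_bound => // i j; rewrite (ord1 j).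
Qed.
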